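(* Let $G$ be a $2$-connected series parallel graph which does not consist of a single edge. Then there exist vertices $s \neq t$ of $G$ such that $(G,s,t)$ is a TTSPG and \[(G,s,t) = (P_1,s,t)\,\|\,(P_2,s,t)\,\|\,(H,s,t),\] where $P_1$ and $P_2$ are paths (path subgraphs, with distinct edge sets) joining $s$ and $t$, and $H$ is a possibly empty subgraph of $G$ (empty meaning that the factor $(H,s,t)$ is absent) such that, when nonempty, $(H,s,t)$ is a TTSPG.
   Context: A graph $G=(V,E)$ has a finite vertex set $V$ and a finite multiset $E$ of unordered pairs of distinct vertices (multiple edges allowed, no loops). A path graph is a graph isomorphic to the graph with vertices $\{1,\dots,n\}$ and edges $\{i,i+1\}$, $i=1,\dots,n-1$; it joins its endpoints $1$ and $n$. A graph is $2$-connected if it is connected and deleting any single vertex (with its incident edges) leaves a connected graph. A two terminal graph (TTG) is a triple $(G,s,t)$ with $s\ne t$ vertices of $G$. The series composition is $(G_1,s_1,t_1)\circ(G_2,s_2,t_2) = (G_1\cup_{t_2\sim s_1} G_2, s_2, t_1)$ (disjoint union with $t_2$ and $s_1$ identified), and the parallel composition is $(G_1,s_1,t_1)\|(G_2,s_2,t_2) = (G_1\cup_{s_1\sim s_2,\,t_1\sim t_2}G_2, s_1,t_1)$ (disjoint union with $s_1,s_2$ identified and $t_1,t_2$ identified); parallel composition is commutative and associative. The class of two terminal series parallel graphs (TTSPGs) is the smallest class of TTGs containing $(K_2,s,t)$ (a single edge $\{s,t\}$) and closed under series and parallel composition. A graph $G$ is series parallel if $(G,s,t)$ is a TTSPG for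 some choice of $s,t$. *)

From mathcomp Require Import all_boot.
Set Implicit Arguments. Unset Strict Implicit. Unset Printing Implicit Defensive.

(* A finite multigraph without loops: finite vertex type, finite edge type
   (distinct elements of [edge] are distinct edges, so parallel edges are
   allowed), each edge having two distinct endpoints.  The orientation
   src/tgt is irrelevant: all notions below only use [joins], which is
   symmetric, so edges are unordered pairs. *)
Record mgraph := MGraph {
  vert : finType;
  edge : finType;
  src : edge -> vert;
  tgt : edge -> vert;
  noloop : forall e, src e != tgt e }.

Section Defs.
Variable G : mgraph.
Notation V := (vert G).
Notation E := (edge G).

Definition joins (e : E) (x y : V) : bool :=
  ((src e == x) && (tgt e == y)) || ((src e == y) && (tgt e == x)).

Definition adj_on (B : {set V}) : rel V :=
  fun x y => [&& x \in B, y \in B & [exists e, joins e x y]].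

Definition connected_on (B : {set V}) : Prop :=
  forall x y, x \in B -> y \in B -> connect (adj_on B) x y.

Definition two_connected : Prop :=
  connected_on setT /\ forall v : V, connected_on (~: [set v]).

(* Internal description of two terminal series parallel (sub)graphs of G:
   [ttspg A F s t] means that the subgraph of G with vertex set A and edge
   set F, with terminals s and t, is a TTSPG.  Series / parallel
   composition of two TTGs is realised, up to isomorphism, as the union of
   two subgraphs with disjoint edge sets that share exactly the identified
   vertices. *)
Inductive ttspg : {set V} -> {set E} -> V -> V -> Prop :=
| ttspg_edge (e : E) (s t : V) :
    joins e s t -> ttspg [set s; t] [set e] s t
| ttspg_series (A1 : {set V}) (F1 : {set E}) (s1 t1 : V)
               (A2 : {set V}) (F2 : {set E}) (s2 t2 : V) :
    ttspg A1 F1 s1 t1 -> ttspg A2 F2 s2 t2 ->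
    t2 = s1 -> A1 :&: A2 = [set s1] -> [disjoint F1 & F2] ->
    ttspg (A1 :|: A2) (F1 :|: F2) s2 t1
| ttspg_parallel (A1 : {set V}) (F1 : {set E})
                 (A2 : {set V}) (F2 : {set E}) (s t : V) :
    ttspg A1 F1 s t -> ttspg A2 F2 s t ->
    A1 :&: A2 = [set s; t] -> [disjoint F1 & F2] ->
    ttspg (A1 :|: A2) (F1 :|: F2) s t.

Definition series_parallel : Prop :=
  exists s t : V, ttspg setT setT s t.

(* The subgraph (A,F) is a path graph joining s and t: it is the image of
   the path 1 - 2 - ... - n under the bijections i |-> vs_i (vertices)
   and {i,i+1} |-> es_i (edges). *)
Definition is_path (A : {set V}) (F : {set E}) (s t : V) : Prop :=
  exists (vs : seq V) (es : seq E),
    [/\ size vs = (size es).+1, uniq vs /\ uniq es,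
        nth s vs 0 = s /\ last s vs = t,
        (forall i (e0 : E) (x0 : V), i < size es ->
            joins (nth e0 es i) (nth x0 vs i) (nth x0 vs i.+1)) &
        A = [set x in vs] /\ F = [set e in es]].

End Defs.

From mathcomp Require Import all_boot.
Set Implicit Arguments. Unset Strict Implicit. Unset Printing Implicit Defensive.

(* The root of a series-parallel construction of G is neither an edge (G is
   not K2) nor a series composition (its middle terminal would be a cut
   vertex), so (G,s,t) = (H1,s,t) || (H2,s,t).  By induction on the
   construction, every TTSPG is a path or contains two parallel paths between
   some u and v whose complement, in any parallel closure of the TTSPG, is
   again a TTSPG between u and v: series composition keeps paths paths,
   parallel composition of two paths creates such a pair, and both
   compositions preserve having one.  If H1 and H2 are both paths, H is
   absent; otherwise one of them provides the decomposition at its u, v. *)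

Section SetGluing.
Variable T : finType.
Implicit Types A B C S : {set T}.

Lemma disjointsU A B C :
  [disjoint A :|: B & C] = [disjoint A & C] && [disjoint B & C].
Proof. by rewrite -disjointU; apply: eq_disjoint => x; rewrite !inE. Qed.

Lemma setI_parallel A1 A2 A3 S :
  A1 :&: A2 = S -> (A1 :|: A2) :&: A3 = S ->
  A2 :&: A3 = S /\ A1 :&: (A2 :|: A3) = S.
Proof.
move=> /setP I12 /setP I3; split; apply/setP=> x; move: (I12 x) (I3 x);
by rewrite !inE; case: (x \in A1) (x \in A2) (x \in A3) (x \in S) => [] [] [] [].
Qed.

Lemma setI_series A1 A2 A3 (a b c : T) :
  A1 :&: A2 = [set c] -> (A1 :|: A2) :&: A3 = [set a; b] ->
  a \in A1 -> b \in A2 -> b != c -> A1 :&: A3 = [set a].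
Proof.
move=> I12 I3 aA1 bA2 bc; apply/setP=> x; rewrite !inE.
have aA3 : a \in A3 by have := set21 a b; rewrite -I3 inE => /andP[].
apply/andP/eqP=> [[xA1 xA3]|->] //.
have /set2P[//|xb] : x \in [set a; b] by rewrite -I3 !inE xA1 xA3.
have /set1P bc' : b \in [set c] by rewrite -I12 inE -xb xA1 xb bA2.
by rewrite bc' eqxx in bc.
Qed.

End SetGluing.

Section Graph.
Variable G : mgraph.
Notation V := (vert G).
Notation E := (edge G).
Implicit Types (A : {set V}) (F : {set E}) (s t u v x y : V) (e : E).

Lemma joins_sym e x y : joins e x y = joins e y x.
Proof. by rewrite /joins orbC. Qed.

Lemma joins_neq e x y : joins e x y -> x != y.
Proof.
by case/orP=> /andP[/eqP<- /eqP<-]; [|rewrite eq_sym]; apply: noloop.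
Qed.

Lemma ttspg_ends A F s t : ttspg A F s t -> [/\ s \in A, t \in A & s != t].
Proof.
elim=> {A F s t} [e s t st | A1 F1 s1 t1 A2 F2 s2 t2 _ [s1A1 t1A1 _] _ [s2A2 _ s2t2] t2s1 I _
                 | A1 F1 A2 F2 s t _ [sA1 tA1 st] _ _ _ _].
- by rewrite !inE !eqxx orbT (joins_neq st).
- rewrite !inE s2A2 t1A1 orbT; split=> //; apply: contra s2t2 => /eqP s2t1.
  by rewrite t2s1 -in_set1 -I inE s2A2 s2t1 t1A1.
- by rewrite !inE sA1 tA1.
Qed.

Lemma ttspg_joins A F s t e x y :
  ttspg A F s t -> e \in F -> joins e x y -> x \in A /\ y \in A.
Proof.
move=> H; elim: H x y => {A F s t}
  [f s t st | A1 F1 s1 t1 A2 F2 s2 t2 _ IH1 _ IH2 _ _ _ | A1 F1 A2 F2 s t _ IH1 _ IH2 _ _] x y.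
- rewrite inE => /eqP-> /orP[] /andP[/eqP<- /eqP<-];
  by case/orP: st => /andP[/eqP<- /eqP<-]; rewrite !inE !eqxx ?orbT.
- by rewrite !inE => /orP[/IH1|/IH2] /[apply] -[-> ->]; rewrite ?orbT.
- by rewrite !inE => /orP[/IH1|/IH2] /[apply] -[-> ->]; rewrite ?orbT.
Qed.

Lemma ttspg_sym A F s t : ttspg A F s t -> ttspg A F t s.
Proof.
elim=> {A F s t} [e s t st | A1 F1 s1 t1 A2 F2 s2 t2 _ H1 _ H2 t2s1 I D
                 | A1 F1 A2 F2 s t _ H1 _ H2 I D].
- by rewrite setUC; apply: ttspg_edge; rewrite joins_sym.
- rewrite setUC [F1 :|: _]setUC; apply: ttspg_series H2 H1 _ _ _ => //.
    by rewrite setIC I t2s1.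
  by rewrite disjoint_sym.
- by apply: ttspg_parallel H1 H2 _ D; rewrite I setUC.
Qed.

Fixpoint walk x (vs : seq V) (es : seq E) : bool :=
  match vs, es with
  | [::], [::] => true
  | y :: vs', e :: es' => joins e x y && walk y vs' es'
  | _, _ => false
  end.

Lemma walk_nth x vs es :
  walk x vs es <-> size vs = size es /\
    forall i e0 x0, i < size es ->
      joins (nth e0 es i) (nth x0 (x :: vs) i) (nth x0 (x :: vs) i.+1).
Proof.
elim: es x vs => [|e es IH] x [|y vs] /=; [by [] | by split=> // -[] ..|].
split=> [/andP[exy /IH[-> J]]|[[size_vs] J]].
  by split=> // -[|i] e0 x0 //= /J.
apply/andP; split; first exact: (J 0 e x).
by apply/IH; split=> // i e0 x0 lt_i; apply: (J i.+1).
Qed.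

Lemma walk_cat x vs1 vs2 es1 es2 :
  walk x vs1 es1 -> walk x (vs1 ++ vs2) (es1 ++ es2) = walk (last x vs1) vs2 es2.
Proof.
elim: vs1 es1 x => [|y vs1 IH] [|e es1] x //= /andP[-> W1].
exact: IH.
Qed.

Lemma is_pathP A F s t :
  is_path A F s t <-> exists vs es,
    [/\ uniq (s :: vs), uniq es, walk s vs es, last s vs = t &
        A = [set x in s :: vs] /\ F = [set e in es]].
Proof.
split=> [[[|s' vs] [es [size_vs [Uv Ue] [/= s's Lv] J EAF]]] //|].
  subst s'; exists vs, es; split=> //; apply/walk_nth; split; [by case: size_vs | exact: J].
move=> [vs [es [Uv Ue /walk_nth[size_vs J] Lv EAF]]].
by exists (s :: vs), es; split=> //=; rewrite size_vs.
Qed.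

Lemma path_edge e s t : joins e s t -> is_path [set s; t] [set e] s t.
Proof.
move=> st; apply/is_pathP; exists [:: t], [:: e].
by split=> //=; rewrite ?st ?inE ?(joins_neq st) //; split; apply/setP=> x; rewrite !inE.
Qed.

Lemma path_disjoint_neq A1 F1 F2 s t :
  is_path A1 F1 s t -> s != t -> [disjoint F1 & F2] -> F1 != F2.
Proof.
move=> /is_pathP[vs [[|e es] [_ _ W Lv [_ ->]]]] st D.
  by case: vs W Lv => //= _ ts; rewrite ts eqxx in st.
apply/eqP=> F12; move: D; rewrite -F12 -setI_eq0 setIid => /eqP/setP/(_ e).
by rewrite !inE eqxx.
Qed.

Lemma path_series A1 F1 s1 t1 A2 F2 s2 :
  is_path A1 F1 s1 t1 -> is_path A2 F2 s2 s1 ->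
  A1 :&: A2 = [set s1] -> [disjoint F1 & F2] ->
  is_path (A1 :|: A2) (F1 :|: F2) s2 t1.
Proof.
move=> /is_pathP[vs1 [es1 [U1 Ue1 W1 L1 [-> ->]]]].
move=> /is_pathP[vs2 [es2 [U2 Ue2 W2 L2 [-> ->]]]] I D.
have s1_vs2 : s1 \in s2 :: vs2 by rewrite -L2 mem_last.
apply/is_pathP; exists (vs2 ++ vs1), (es2 ++ es1); split.
- move: U1; rewrite -cat_cons cat_uniq U2 /= => /andP[s1_vs1 ->]; rewrite andbT.
  apply/hasPn=> x x_vs1; move: s1_vs1; apply: contra => x_vs2.
  by have /set1P <- : x \in [set s1] by rewrite -I !inE x_vs1 orbT.
- rewrite cat_uniq Ue2 Ue1 andbT; apply/hasPn=> e e_es1.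
  by have := disjointFr D (x := e); rewrite !inE e_es1 => ->.
- by rewrite walk_cat // L2.
- by rewrite last_cat L2.
- split; apply/setP=> x; rewrite !in_setU !in_set -?cat_cons mem_cat; last by rewrite orbC.
  by rewrite in_cons; case: eqP => [->|_]; rewrite ?s1_vs2 ?orbT // orbC.
Qed.

Definition parallel_complement A F s t A' F' : Prop :=
  [/\ ttspg A' F' s t, A :&: A' = [set s; t] & [disjoint F & F'] ].

Definition parallel_paths B1 K1 B2 K2 u v : Prop :=
  [/\ is_path B1 K1 u v, is_path B2 K2 u v, ttspg (B1 :|: B2) (K1 :|: K2) u v,
      B1 :&: B2 = [set u; v] & [disjoint K1 & K2] ].

(* The pair of paths is found inside (A,F) and is independent of the
   closure, while the remaining TTSPG (A3,F3) depends on it. *)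
Definition has_parallel_paths A F s t : Prop :=
  exists u v B1 K1 B2 K2, parallel_paths B1 K1 B2 K2 u v /\
    forall A' F', parallel_complement A F s t A' F' ->
      exists A3 F3, [/\ parallel_complement (B1 :|: B2) (K1 :|: K2) u v A3 F3,
                        B1 :|: B2 :|: A3 = A :|: A' & K1 :|: K2 :|: F3 = F :|: F'].

Lemma parallel_complement_sym A F s t A' F' :
  ttspg A F s t -> parallel_complement A F s t A' F' ->
  parallel_complement A' F' s t A F.
Proof. by move=> H [_ I D]; split; rewrite 1?setIC 1?disjoint_sym. Qed.

Lemma has_parallel_paths_transfer A F s t A0 F0 s0 t0 :
  has_parallel_paths A F s t ->
  (forall A' F', parallel_complement A0 F0 s0 t0 A' F' ->
     exists A'' F'', [/\ parallel_complement A F s t A'' F'',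
                         A :|: A'' = A0 :|: A' & F :|: F'' = F0 :|: F']) ->
  has_parallel_paths A0 F0 s0 t0.
Proof.
move=> [u [v [B1 [K1 [B2 [K2 [PP close]]]]]]] complement.
exists u, v, B1, K1, B2, K2; split=> // A' F' /complement[A'' [F'' [C EA EF]]].
by have [A3 [F3 [C3 EA3 EF3]]] := close _ _ C; exists A3, F3; rewrite EA3 EF3.
Qed.

Lemma has_parallel_paths_sym A F s t :
  has_parallel_paths A F s t -> has_parallel_paths A F t s.
Proof.
move/has_parallel_paths_transfer; apply=> A' F' [H I D].
by exists A', F'; split=> //; split=> //; [exact: ttspg_sym | rewrite I setUC].
Qed.

Lemma has_parallel_paths_of_paths A1 F1 A2 F2 s t :
  ttspg A1 F1 s t -> ttspg A2 F2 s t -> is_path A1 F1 s t -> is_path A2 F2 s t ->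
  A1 :&: A2 = [set s; t] -> [disjoint F1 & F2] ->
  has_parallel_paths (A1 :|: A2) (F1 :|: F2) s t.
Proof.
move=> H1 H2 P1 P2 I D; exists s, t, A1, F1, A2, F2.
by split=> [|A' F' C]; [split=> //; exact: ttspg_parallel | exists A', F'].
Qed.

Lemma has_parallel_paths_parallel A1 F1 A2 F2 s t :
  has_parallel_paths A1 F1 s t -> ttspg A2 F2 s t ->
  A1 :&: A2 = [set s; t] -> [disjoint F1 & F2] ->
  has_parallel_paths (A1 :|: A2) (F1 :|: F2) s t.
Proof.
move/has_parallel_paths_transfer=> + H2 I D; apply=> A' F' [H' I' D'].
have [I2' I1'] := setI_parallel I I'.
move: D'; rewrite disjointsU => /andP[D1' D2'].
exists (A2 :|: A'), (F2 :|: F'); rewrite !setUA; split=> //; split=> //.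
- exact: ttspg_parallel H2 H' I2' D2'.
- by rewrite disjoint_sym disjointsU disjoint_sym D disjoint_sym D1'.
Qed.

Lemma has_parallel_paths_seriesr A1 F1 s1 t1 A2 F2 s2 :
  ttspg A1 F1 s1 t1 -> ttspg A2 F2 s2 s1 -> has_parallel_paths A2 F2 s2 s1 ->
  A1 :&: A2 = [set s1] -> [disjoint F1 & F2] ->
  has_parallel_paths (A1 :|: A2) (F1 :|: F2) s2 t1.
Proof.
move=> H1 H2 /has_parallel_paths_transfer + I D; apply=> A' F' [H' I' D'].
have [s1A1 t1A1 s1t1] := ttspg_ends H1.
have [s2A2 _ s2s1] := ttspg_ends H2.
have I1' : A1 :&: A' = [set t1].
  by apply: setI_series I _ t1A1 s2A2 s2s1; rewrite I' setUC.
have I2' : A2 :&: A' = [set s2].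
  apply: (@setI_series _ A2 A1 A' s2 t1 s1) => //; first by rewrite setIC.
    by rewrite setUC.
  by rewrite eq_sym.
move: D'; rewrite disjointsU => /andP[D1' D2'].
exists (A1 :|: A'), (F1 :|: F'); rewrite setUCA setUA [F2 :|: _]setUCA setUA.
split=> //; split.
- exact: ttspg_series (ttspg_sym H1) H' _ I1' D1'.
- by rewrite setIUr setIC I I2' setUC.
- by rewrite disjoint_sym disjointsU D disjoint_sym D2'.
Qed.

Lemma has_parallel_paths_seriesl A1 F1 s1 t1 A2 F2 s2 :
  ttspg A1 F1 s1 t1 -> has_parallel_paths A1 F1 s1 t1 -> ttspg A2 F2 s2 s1 ->
  A1 :&: A2 = [set s1] -> [disjoint F1 & F2] ->
  has_parallel_paths (A1 :|: A2) (F1 :|: F2) s2 t1.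
Proof.
move=> H1 PP1 H2 I D; apply: has_parallel_paths_sym.
rewrite setUC [F1 :|: _]setUC.
apply: has_parallel_paths_seriesr (ttspg_sym H2) (ttspg_sym H1) _ _ _.
- exact: has_parallel_paths_sym.
- by rewrite setIC.
- by rewrite disjoint_sym.
Qed.

Lemma ttspg_path_or_parallel_paths A F s t :
  ttspg A F s t -> is_path A F s t \/ has_parallel_paths A F s t.
Proof.
elim=> {A F s t} [e s t st | A1 F1 s1 t1 A2 F2 s2 t2 H1 IH1 H2 IH2 t2s1 I D
                 | A1 F1 A2 F2 s t H1 IH1 H2 IH2 I D].
- by left; apply: path_edge.
- subst t2; case: IH1 => [P1|PP1]; last first.
    by right; exact: has_parallel_paths_seriesl H1 PP1 H2 I D.
  case: IH2 => [P2|PP2]; first by left; exact: path_series P1 P2 I D.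
  by right; exact: has_parallel_paths_seriesr H1 H2 PP2 I D.
- right; case: IH1 => [P1|PP1]; last exact: has_parallel_paths_parallel.
  case: IH2 => [P2|PP2]; first exact: has_parallel_paths_of_paths.
  rewrite setUC [F1 :|: _]setUC; apply: has_parallel_paths_parallel PP2 H1 _ _.
    by rewrite setIC.
  by rewrite disjoint_sym.
Qed.

Lemma series_cut_vertex A1 F1 s1 t1 A2 F2 s2 :
  ttspg A1 F1 s1 t1 -> ttspg A2 F2 s2 s1 ->
  A1 :&: A2 = [set s1] -> F1 :|: F2 = setT -> ~ connected_on (~: [set s1]).
Proof.
move=> H1 H2 I EF conn.
have [_ t1A1 s1t1] := ttspg_ends H1; have [s2A2 _ s2s1] := ttspg_ends H2.
have notin_A1 x : x \in A2 -> x != s1 -> x \notin A1.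
  by move=> xA2; apply: contra => xA1; rewrite -in_set1 -I inE xA1.
have A1_closed : closed (adj_on (~: [set s1])) A1.
  move=> x y /and3P[]; rewrite !inE => xs1 ys1 /existsP[e exy].
  have : e \in F1 :|: F2 by rewrite EF inE.
  case/setUP=> eF; first by have [-> ->] := ttspg_joins H1 eF exy.
  have [xA2 yA2] := ttspg_joins H2 eF exy.
  by rewrite (negPf (notin_A1 x xA2 xs1)) (negPf (notin_A1 y yA2 ys1)).
have := closed_connect A1_closed (conn t1 s2 _ _).
by rewrite t1A1 (negPf (notin_A1 s2 s2A2 s2s1)) !inE eq_sym s1t1 s2s1 => /(_ isT isT).
Qed.

Lemma ttspg_full_parallel s t :
  two_connected G -> ~ (#|V| = 2 /\ #|E| = 1) -> ttspg setT setT s t ->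
  exists A1 F1 A2 F2, [/\ ttspg A1 F1 s t, parallel_complement A1 F1 s t A2 F2,
                          A1 :|: A2 = setT & F1 :|: F2 = setT].
Proof.
move=> [_ cut_free] not_edge.
move EA: setT => A; move EF: setT => F H.
case: H EA EF => {A F s t} [e s t st | A1 F1 s1 t1 A2 F2 s2 t2 H1 H2 t2s1 I _
                           | A1 F1 A2 F2 s t H1 H2 I D] EA EF.
- by case: not_edge; rewrite -!cardsT EA EF cards1 cards2 (joins_neq st).
- by subst t2; case: (series_cut_vertex H1 H2 I (esym EF) (cut_free s1)).
- by exists A1, F1, A2, F2.
Qed.

Lemma two_connected_parallel_paths :
  two_connected G -> series_parallel G -> ~ (#|V| = 2 /\ #|E| = 1) ->
  exists u v B1 K1 B2 K2, parallel_paths B1 K1 B2 K2 u v /\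
    ((B1 :|: B2 = setT /\ K1 :|: K2 = setT) \/
     exists A3 F3, [/\ parallel_complement (B1 :|: B2) (K1 :|: K2) u v A3 F3,
                       B1 :|: B2 :|: A3 = setT & K1 :|: K2 :|: F3 = setT]).
Proof.
move=> G2 [s [t H]] not_edge.
have [A1 [F1 [A2 [F2 [H1 C12 EA EF]]]]] := ttspg_full_parallel G2 not_edge H.
have C21 := parallel_complement_sym H1 C12; have [H2 I D] := C12.
have close_up A F A' F' : has_parallel_paths A F s t ->
    parallel_complement A F s t A' F' -> A :|: A' = setT -> F :|: F' = setT ->
    exists u v B1 K1 B2 K2, parallel_paths B1 K1 B2 K2 u v /\
    exists A3 F3, [/\ parallel_complement (B1 :|: B2) (K1 :|: K2) u v A3 F3,
                      B1 :|: B2 :|: A3 = setT & K1 :|: K2 :|: F3 = setT].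
  move=> [u [v [B1 [K1 [B2 [K2 [PP close]]]]]]] C EA' EF'.
  by exists u, v, B1, K1, B2, K2; split=> //; rewrite -EA' -EF'; apply: close.
case: (ttspg_path_or_parallel_paths H1) => [P1|/close_up/(_ C12 EA EF)]; last first.
  by move=> [u [v [B1 [K1 [B2 [K2 [PP C]]]]]]]; exists u, v, B1, K1, B2, K2; split=> //; right.
case: (ttspg_path_or_parallel_paths H2) => [P2|/close_up/(_ C21)]; last first.
  rewrite setUC [F2 :|: _]setUC => /(_ EA EF) [u [v [B1 [K1 [B2 [K2 [PP C]]]]]]].
  by exists u, v, B1, K1, B2, K2; split=> //; right.
exists s, t, A1, F1, A2, F2; split; last by left.
by split=> //; apply: ttspg_parallel.
Qed.

End Graph.

Theorem mainTheorem1 (G : mgraph) :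
  two_connected G -> series_parallel G ->
  ~ (#|vert G| = 2 /\ #|edge G| = 1) ->
  exists s t : vert G, s != t /\ ttspg setT setT s t /\
    exists (A1 A2 : {set vert G}) (F1 F2 : {set edge G}),
      [/\ is_path A1 F1 s t, is_path A2 F2 s t, F1 != F2 &
        (* H absent: (G,s,t) = (P1,s,t) || (P2,s,t) *)
        ([/\ A1 :&: A2 = [set s; t], [disjoint F1 & F2],
             A1 :|: A2 = setT & F1 :|: F2 = setT]
        \/
        (* H present: (G,s,t) = (P1,s,t) || (P2,s,t) || (H,s,t) *)
        exists (A3 : {set vert G}) (F3 : {set edge G}),
          [/\ ttspg A3 F3 s t,
              A1 :&: A2 = [set s; t] /\ A1 :&: A3 = [set s; t] /\
              A2 :&: A3 = [set s; t],
              [disjoint F1 & F2] /\ [disjoint F1 & F3] /\ [disjoint F2 & F3],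
              A1 :|: A2 :|: A3 = setT & F1 :|: F2 :|: F3 = setT])].
Proof.
move=> G2 sp not_edge.
have [u [v [B1 [K1 [B2 [K2 [[P1 P2 H12 I12 D12] rest]]]]]]] :=
  two_connected_parallel_paths G2 sp not_edge.
have [_ _ uv] := ttspg_ends H12.
have K12 := path_disjoint_neq P1 uv D12.
exists u, v; split=> //.
case: rest => [[EA EF]|[A3 [F3 [[H3 I3 D3] EA EF]]]].
  by split; [rewrite -EA -EF | exists B1, B2, K1, K2; split=> //; left].
split; first by rewrite -EA -EF; exact: ttspg_parallel H12 H3 I3 D3.
have [I23 _] := setI_parallel I12 I3.
have [I13 _] : B1 :&: A3 = [set u; v] /\ B2 :&: (B1 :|: A3) = [set u; v].
  by apply: setI_parallel; [rewrite setIC | rewrite setUC].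
move: D3; rewrite disjointsU => /andP[D13 D23].
by exists B1, B2, K1, K2; split=> //; right; exists A3, F3.
Qed.
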